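(* Let $X$ be an $n$-dimensional projective space over an arbitrary field, and let $K$ be a $k$-dimensional subspace of $X$, where $-1\le k\le\min\{\frac{n-1}{2},n-3\}$. Let $\mathcal B_K$ be a $(2,1)$-blocking set in $K$ and let $\mathcal B_{X/K}$ be a $(2,1)$-blocking set in $X/K$. Then there exist, for every point $P$ of $K$, a hyperplane $H_P$ of $X$ with $K\subseteq H_P$, such that, letting $\mathcal B_{X/P}$ be the set of lines of $X$ through $P$ contained in $H_P$ (a $(1,0)$-blocking set in $X/P$), the disjoint union $$\mathcal B:=\{T\in\mathrm{Gr}_1(X):\langle K,T\rangle\in\mathcal B_{X/K}\}\ \cup\ \bigcup_{P\in\mathrm{Gr}_0(K)}\bigl(\mathcal B_{X/P}\setminus\{\text{lines of }K\text{ through }P\}\bigr)\ \cup\ \mathcal B_K$$ is a $(2,1)$-blocking set in $X$.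
   Context: Projective dimension is used; $\mathrm{Gr}_d(Y)$ is the set of $d$-dimensional subspaces of a projective space $Y$ (points: $d=0$, lines: $d=1$). For a $k$-dimensional subspace $K$ of $X$, the quotient space $X/K$ is the projective space of dimension $\dim X-k-1$ whose $r$-dimensional subspaces are the $(r+k+1)$-dimensional subspaces of $X$ containing $K$; $\langle K,T\rangle$ (the span) is regarded as an element of $X/K$. In particular, for a point $P$, points of $X/P$ are lines of $X$ through $P$ and lines of $X/P$ are planes of $X$ through $P$. For $-1\le t\le s$, an $(s,t)$-blocking set in a projective space $Y$ is a set of $t$-dimensional subspaces of $Y$ such that every $s$-dimensional subspace of $Y$ contains at least one of them. Thus a $(2,1)$-blocking set is a set of lines meeting the condition that every plane contains one of them. *)

(* Projective geometry modelled by linear algebra: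
   the n-dimensional projective space X over a field F is the lattice of
   subspaces of the vector space 'rV[F]_(n.+1) = F^(n+1); a projective
   subspace of projective dimension d is a vspace of (vector) dimension d+1
   (so the empty subspace, dim -1, is 0%VS; points have \dim 1, lines \dim 2). *)
From HB Require Import structures.
From mathcomp Require Import all_boot all_order all_algebra.
Set Implicit Arguments. Unset Strict Implicit. Unset Printing Implicit Defensive.
Import GRing.Theory.
Local Open Scope ring_scope.

(* Blocking sets in the quotient/interval geometry [L, Y]:
   for subspaces L <= Y, the projective space Y/L has as its r-dimensional
   subspaces the (r + k + 1)-dimensional subspaces U of Y containing L,
   where k = projective dim of L; in vector dimensions:
   \dim U = \dim L + (r+1).
   [qblocking L Y s t B]: B is an (s,t)-blocking set in Y/L, i.e. B is a
   set of t-dimensional subspaces of Y/L such that every s-dimensional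
   subspace of Y/L contains at least one element of B.
   With L = 0 this is an (s,t)-blocking set in the projective space Y itself. *)
Definition qblocking (F : fieldType) (vT : vectType F) (L Y : {vspace vT})
    (s t : nat) (B : {vspace vT} -> Prop) : Prop :=
  (forall U, B U -> [/\ (L <= U)%VS, (U <= Y)%VS & \dim U = (\dim L + t.+1)%N]) /\
  (forall S, (L <= S)%VS -> (S <= Y)%VS -> \dim S = (\dim L + s.+1)%N ->
     exists U, B U /\ (U <= S)%VS).

From HB Require Import structures.
From mathcomp Require Import all_boot all_order all_algebra.
From mathcomp Require Import zify.
Set Implicit Arguments. Unset Strict Implicit. Unset Printing Implicit Defensive.
Import GRing.Theory.
Local Open Scope ring_scope.

(* Since 2 dim K <= n + 1, the coordinates of K embed into those of a
   complement K^C; this gives a pairing <p, w> between p in K and the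
   K^C-component of w, and the point <p> of K gets the hyperplane
   H_p = { w | <p, w> = 0 }, which contains K.  A plane S of X is blocked
   according to S :&: K.  If S misses K, then K + S is a plane of X/K, so it
   contains some U in B_{X/K}, and T = S :&: U is a line with K + T = U.  If
   S meets K in a point P, the hyperplane H_P cuts S in a line through P
   outside K.  If S meets K in a line L, take v in S \ K: the linear form
   p |-> <p, v> vanishes at a point P of L, so the line P + <v> lies in H_P. *)

Section Functional.
Variables (F : fieldType) (vT : vectType F) (f : 'Hom(vT, F^o)).

Lemma dim_functional_img (U : {vspace vT}) : (\dim (f @: U) <= 1)%N.
Proof. by rewrite (leq_trans (dimvS (subvf _))) ?dimvf. Qed.

Lemma dim_lker_functional w : f w != 0 -> (\dim (lker f)).+1 = \dim {:vT}.
Proof.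
move=> fw; rewrite -(limg_ker_dim f fullv) capfv.
suff -> : \dim (limg f) = 1%N by rewrite addn1.
apply/anti_leq; rewrite dim_functional_img lt0n dimv_eq0.
by apply: contraNneq fw => f0; rewrite -memv0 -f0 memv_img ?memvf.
Qed.

Lemma dim_cap_lker_functional (U : {vspace vT}) :
  (\dim U <= (\dim (U :&: lker f)).+1)%N.
Proof. by rewrite -(limg_ker_dim f U) -addn1 leq_add2l dim_functional_img. Qed.

End Functional.

Lemma dimv_add_line (F : fieldType) (vT : vectType F) (U : {vspace vT}) v :
  v \notin U -> \dim (U + <[v]>) = (\dim U).+1.
Proof.
move=> vU; have v0 : v != 0 by apply: contraNneq vU => ->; rewrite mem0v.
have := dimv_sum_cap U <[v]>; rewrite dim_vline v0 addn1.
suff -> : (U :&: <[v]> = 0)%VS by rewrite dimv0 addn0.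
apply/eqP; rewrite -subv0; apply/subvP => w /memv_capP[wU /vlineP[c wc]].
rewrite memv0 wc; apply: contraNT vU; rewrite scaler_eq0 negb_or => /andP[c0 _].
by rewrite -[v](scalerK c0) memvZ -?wc.
Qed.

Section PointHyperplanes.
Variables (F : fieldType) (vT : vectType F) (K : {vspace vT}).
Hypothesis leK_compl : (\dim K <= \dim K^C)%N.

Definition compl_coord (i : 'I_(\dim K)) : 'Hom(vT, F^o) :=
  (linfun (coord (vbasis K^C) (widen_ord leK_compl i) : vT -> F^o)
     \o (\1 - projv K))%VF.

Lemma compl_coord_K i w : w \in K -> compl_coord i w = 0.
Proof.
move=> wK; rewrite comp_lfunE add_lfunE opp_lfunE id_lfunE.
by rewrite projv_id // subrr linear0.
Qed.

Lemma compl_coord_basis i j :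
  compl_coord i (vbasis K^C)`_(widen_ord leK_compl j) = (j == i)%:R.
Proof.
set c := _`_ _; have cC : c \in (K^C)%VS by rewrite vbasis_mem ?mem_nth ?size_tuple.
have pc0 : projv K c = 0 by apply/eqP; rewrite -memv_ker lker_proj.
rewrite comp_lfunE add_lfunE opp_lfunE id_lfunE pc0 subr0 lfunE /=.
by rewrite coord_free ?(basis_free (vbasisP _)) // (inj_eq (@widen_ord_inj _ _ _)).
Qed.

Definition point_form (p : vT) : 'Hom(vT, F^o) :=
  \sum_i coord (vbasis K) i p *: compl_coord i.

Definition form_at (w : vT) : 'Hom(vT, F^o) :=
  \sum_i compl_coord i w *: linfun (coord (vbasis K) i : vT -> F^o).

Lemma form_atE w p : form_at w p = point_form p w.
Proof.
rewrite !sum_lfunE; apply: eq_bigr => i _.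
by rewrite !scale_lfunE [X in _ *: X]lfunE; apply: mulrC.
Qed.

Lemma point_form_neq0 p : p \in K -> p != 0 -> exists w, point_form p w != 0.
Proof.
move=> pK p0; have [i ci] : exists i, coord (vbasis K) i p != 0.
  apply/existsP; apply: contraNT p0 => /existsPn c0.
  by rewrite (coord_vbasis pK) big1 // => i _; rewrite (eqP (negPn (c0 i))) scale0r.
exists (vbasis K^C)`_(widen_ord leK_compl i).
rewrite sum_lfunE (bigD1 i) //= big1 => [|j ji].
  by rewrite scale_lfunE compl_coord_basis eqxx addr0 scaler_eq0 (negPf ci) oner_eq0.
by rewrite scale_lfunE compl_coord_basis eq_sym (negPf ji) scaler0.
Qed.

Definition point_hyperplane (P : {vspace vT}) : {vspace vT} :=
  lker (point_form (vpick P)).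

Lemma subv_point_hyperplane P : (K <= point_hyperplane P)%VS.
Proof.
apply/subvP => w wK; rewrite memv_ker sum_lfunE big1 // => i _.
by rewrite scale_lfunE compl_coord_K // scaler0.
Qed.

Lemma dim_point_hyperplane P : \dim P = 1%N -> (P <= K)%VS ->
  (\dim (point_hyperplane P)).+1 = \dim {:vT}.
Proof.
move=> dP PK; have pK : vpick P \in K by apply: subvP PK _ (memv_pick P).
have p0 : vpick P != 0 by rewrite vpick0 -dimv_eq0 dP.
by have [w] := point_form_neq0 pK p0; apply: dim_lker_functional.
Qed.

Lemma exists_point_hyperplane_mem L v : \dim L = 2%N -> (L <= K)%VS ->
  exists P, [/\ \dim P = 1%N, (P <= L)%VS & v \in point_hyperplane P].
Proof.
move=> dL LK; set r := vpick (L :&: lker (form_at v)).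
have r0 : r != 0.
  by rewrite vpick0 -dimv_eq0 -lt0n -ltnS -dL dim_cap_lker_functional.
have /memv_capP[rL] : r \in (L :&: lker (form_at v))%VS by apply: memv_pick.
rewrite memv_ker => /eqP fr0.
exists <[r]>%VS; split; first by rewrite dim_vline r0.
  by rewrite -memvE.
rewrite memv_ker; have /vlineP[c ->] := memv_pick <[r]>%VS.
by rewrite -form_atE linearZ /= fr0 scaler0.
Qed.

End PointHyperplanes.

Section GluedBlockingSet.
Variables (F : fieldType) (vT : vectType F) (K : {vspace vT}).
Variables (BK BXK : {vspace vT} -> Prop) (H : {vspace vT} -> {vspace vT}).
Hypotheses (hBK : qblocking 0 K 2 1 BK) (hBXK : qblocking K fullv 2 1 BXK).
Hypothesis subv_H : forall P, \dim P = 1%N -> (P <= K)%VS -> (K <= H P)%VS.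
Hypothesis dim_H : forall P, \dim P = 1%N -> (P <= K)%VS ->
  (\dim (H P)).+1 = \dim {:vT}.
Hypothesis exists_H_mem : forall L v, \dim L = 2%N -> (L <= K)%VS ->
  exists P, [/\ \dim P = 1%N, (P <= L)%VS & v \in H P].

Definition glued_blocking_set (T : {vspace vT}) : Prop :=
  (\dim T = 2%N /\ BXK (K + T)%VS)
  \/ (exists P : {vspace vT},
        [/\ \dim P = 1%N, (P <= K)%VS, \dim T = 2%N, (P <= T)%VS &
            (T <= H P)%VS] /\ ~ (T <= K)%VS)
  \/ BK T.

Lemma glued_blocking_set_dim T : glued_blocking_set T -> \dim T = 2%N.
Proof. by case=> [[] //|[[P [[_ _ ->]]] //|/hBK.1[_ _]]]; rewrite dimv0. Qed.

Lemma glued_blocking_set_line P v : \dim P = 1%N -> (P <= K)%VS ->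
  v \notin K -> v \in H P -> glued_blocking_set (P + <[v]>).
Proof.
move=> dP PK vK vH; right; left; exists P; split; first split => //.
- by rewrite dimv_add_line ?dP //; apply: contra vK; apply: subvP.
- exact: addvSl.
- by rewrite subv_add -memvE vH (subv_trans PK (subv_H dP PK)).
- by move/subvP/(_ v (subvP (addvSr P _) _ (memv_line v))); apply/negP.
Qed.

Section BlockedPlane.
Variables (S : {vspace vT}) (dS : \dim S = 3%N).

Lemma blocked_plane_disjoint : (S :&: K = 0)%VS ->
  exists T, glued_blocking_set T /\ (T <= S)%VS.
Proof.
move=> SK0.
have dKS : \dim (K + S) = (\dim K + 3)%N.
  by rewrite -dS -dimv_sum_cap capvC SK0 dimv0 addn0.
have [U [BU US]] := hBXK.2 _ (addvSl K S) (subvf _) dKS.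
have [KU _ dU] := hBXK.1 U BU.
have KT : (K + (S :&: U) = U)%VS.
  by rewrite vspace_modl // addvC; apply/capv_idPr; rewrite addvC.
have KT0 : (K :&: (S :&: U) = 0)%VS.
  apply/eqP; rewrite -subv0 -SK0 capvC subv_cap capvSr.
  by rewrite (subv_trans (capvSl _ _)) ?capvSl.
exists (S :&: U)%VS; split; last exact: capvSl.
left; split; last by rewrite KT.
by have := dimv_sum_cap K (S :&: U); rewrite KT KT0 dimv0 dU; lia.
Qed.

Lemma blocked_plane_point : \dim (S :&: K) = 1%N ->
  exists T, glued_blocking_set T /\ (T <= S)%VS.
Proof.
set P := (S :&: K)%VS => dP; have PK : (P <= K)%VS by apply: capvSr.
have dSH : (2 <= \dim (S :&: H P))%N.
  have := dimv_sum_cap S (H P); have := dimvS (subvf (S + H P)).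
  by rewrite -(dim_H dP PK) dS; lia.
have /subvPn[v /memv_capP[vS vH] vK] : ~~ (S :&: H P <= K)%VS.
  apply: contraL dSH => SHK; rewrite -ltnNge ltnS -dP dimvS //.
  by rewrite subv_cap capvSl SHK.
exists (P + <[v]>)%VS; split; first exact: glued_blocking_set_line.
by rewrite subv_add capvSl -memvE.
Qed.

Lemma blocked_plane_line : \dim (S :&: K) = 2%N ->
  exists T, glued_blocking_set T /\ (T <= S)%VS.
Proof.
move=> dL; have /subvPn[v vS vK] : ~~ (S <= K)%VS.
  by apply/negP => /capv_idPl SK; move: dL; rewrite SK dS.
have [P [dP PL vH]] := exists_H_mem v dL (capvSr S K).
exists (P + <[v]>)%VS; split.
  by apply: glued_blocking_set_line; rewrite ?(subv_trans PL (capvSr _ _)).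
by rewrite subv_add (subv_trans PL (capvSl _ _)) -memvE.
Qed.

Lemma blocked_plane_in_K : (S <= K)%VS ->
  exists T, glued_blocking_set T /\ (T <= S)%VS.
Proof.
move=> SK; have [|T [BT TS]] := hBK.2 S (sub0v S) SK; first by rewrite dimv0.
by exists T; split => //; right; right.
Qed.

End BlockedPlane.

Lemma glued_blocking_set_blocking : qblocking 0 fullv 2 1 glued_blocking_set.
Proof.
split=> [T /glued_blocking_set_dim dT | S _ _]; first by rewrite sub0v subvf dimv0 dT.
rewrite dimv0 add0n => dS.
have : (\dim (S :&: K) <= 3)%N by rewrite -dS dimvS ?capvSl.
case dSK: (\dim (S :&: K)) => [|[|[|[|//]]]] _.
- by apply: blocked_plane_disjoint => //; apply/eqP; rewrite -dimv_eq0 dSK.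
- exact: blocked_plane_point.
- exact: blocked_plane_line.
by apply: blocked_plane_in_K => //; apply/capv_idPl/eqP; rewrite eqEdim capvSl dS dSK.
Qed.

End GluedBlockingSet.

Theorem theorem3p29 (F : fieldType) (n : nat) (K : {vspace 'rV[F]_n.+1})
    (hk1 : (2 * \dim K <= n.+1)%N) (hk2 : (\dim K + 2 <= n)%N)
    (BK BXK : {vspace 'rV[F]_n.+1} -> Prop)
    (hBK : qblocking 0%VS K 2 1 BK)
    (hBXK : qblocking K fullv 2 1 BXK) :
  exists H : {vspace 'rV[F]_n.+1} -> {vspace 'rV[F]_n.+1},
    (forall P : {vspace 'rV[F]_n.+1}, \dim P = 1%N -> (P <= K)%VS ->
       \dim (H P) = n /\ (K <= H P)%VS) /\
    qblocking 0%VS fullv 2 1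
      (fun T : {vspace 'rV[F]_n.+1} =>
         (\dim T = 2%N /\ BXK (K + T)%VS)
         \/ (exists P : {vspace 'rV[F]_n.+1},
               [/\ \dim P = 1%N, (P <= K)%VS, \dim T = 2%N, (P <= T)%VS &
                   (T <= H P)%VS] /\ ~ (T <= K)%VS)
         \/ BK T).
Proof.
have dimV : \dim {:'rV[F]_n.+1} = n.+1 by rewrite dimvf /dim /= mul1n.
have leK_compl : (\dim K <= \dim K^C)%N by rewrite dimv_compl dimV; lia.
exists (point_hyperplane leK_compl); split.
  move=> P dP PK; split; last exact: subv_point_hyperplane.
  by apply: succn_inj; rewrite dim_point_hyperplane // dimV.
apply: glued_blocking_set_blocking hBK hBXK _ (dim_point_hyperplane leK_compl) _.
- by move=> P _ _; apply: subv_point_hyperplane.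
- exact: exists_point_hyperplane_mem.
Qed.
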